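(* Let $E_1,E_2$ be isogenous complex elliptic curves with complex multiplication, $\mathrm{End}_{\mathbb Q}(E_i)=\mathbb Q(\sqrt d)$ with $d<0$ square-free, and $\mathrm{End}(E_i)=\mathbb Z+f_i\omega\mathbb Z$ with integers $f_1,f_2\ge1$, where $\omega=\sqrt d$ if $d\equiv2,3\pmod4$ and $\omega=\tfrac12(1+\sqrt d)$ if $d\equiv1\pmod4$. Let $X=E_1\times E_2$. Then the discriminant of $\mathrm{NS}(X)$ is $$\Delta(X)=-4\,\mathrm{lcm}(f_1,f_2)^2\,(\mathrm{Im}\,\omega)^2.$$
   Context: The discriminant of $\mathrm{NS}(X)$ is the determinant of the Gram matrix of the intersection form with respect to a lattice basis of the Néron–Severi lattice. *)

(* Complex elliptic curves are modelled analytically as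
   complex tori C/(Z + tau Z) with Im tau > 0, over algC (CM curves have
   algebraic tau, so nothing is lost).  NS of the abelian surface
   X = E1 x E2 = C^2 / Lambda is given by the Appell--Humbert description:
   alternating integral forms A on Lambda that are the imaginary part of a
   Hermitian form on C^2; the intersection form is the cup product,
   (L.M) = B(A_L, A_M), where B is the polarisation of 2*Pfaffian
   computed in the positively oriented lattice basis
   (1,0), (tau1,0), (0,1), (0,tau2). *)
From HB Require Import structures.
From mathcomp Require Import all_boot all_order all_algebra all_field.
Set Implicit Arguments. Unset Strict Implicit. Unset Printing Implicit Defensive.
Import Order.TTheory GRing.Theory Num.Theory.
Local Open Scope ring_scope.

Definition squarefree_int (d : int) : Prop :=
  forall p : nat, prime p -> ~~ (p ^ 2 %| `|d|)%N.

Definition omega_of (d : int) : algC :=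
  if (d %% 4)%Z == 1 then (1 + sqrtC (d%:~R)) / 2 else sqrtC (d%:~R).

Definition inLat (tau z : algC) : Prop :=
  exists a b : int, z = a%:~R + b%:~R * tau.

Definition isEnd (tau alpha : algC) : Prop :=
  inLat tau alpha /\ inLat tau (alpha * tau).

Definition isogenous (t1 t2 : algC) : Prop :=
  exists alpha : algC, alpha != 0 /\ inLat t2 alpha /\ inLat t2 (alpha * t1).

Definition latvec (t1 t2 : algC) (i : 'I_4) : algC * algC :=
  match val i with
  | 0 => (1, 0)
  | 1 => (t1, 0)
  | 2 => (0, 1)
  | _ => (0, t2)
  end.

Definition hermitian (M : 'M[algC]_2) : Prop :=
  forall i j, M j i = (M i j)^*.

Definition hform (M : 'M[algC]_2) (x y : algC * algC) : algC :=
  x.1 * M 0 0 * (y.1)^* + x.1 * M 0 1 * (y.2)^*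
  + x.2 * M 1 0 * (y.1)^* + x.2 * M 1 1 * (y.2)^*.

Definition inNS (t1 t2 : algC) (A : 'M[int]_4) : Prop :=
  exists M : 'M[algC]_2, hermitian M /\
    forall i j, 'Im (hform M (latvec t1 t2 i) (latvec t1 t2 j)) = (A i j)%:~R.

Definition o0 : 'I_4 := inord 0.
Definition o1 : 'I_4 := inord 1.
Definition o2 : 'I_4 := inord 2.
Definition o3 : 'I_4 := inord 3.

(* intersection form: (L.M) = integral of c1(L) /\ c1(M); (L.L) = 2 Pf *)
Definition intersect (A B : 'M[int]_4) : int :=
  A o0 o1 * B o2 o3 + B o0 o1 * A o2 o3
  - A o0 o2 * B o1 o3 - B o0 o2 * A o1 o3
  + A o0 o3 * B o1 o2 + B o0 o3 * A o1 o2.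

Definition NS_basis (t1 t2 : algC) (n : nat) (b : 'I_n -> 'M[int]_4) : Prop :=
  [/\ forall i, inNS t1 t2 (b i),
      forall A, inNS t1 t2 A -> exists c : 'I_n -> int, A = \sum_(i < n) c i *: b i
    & forall c : 'I_n -> int, \sum_(i < n) c i *: b i = 0 -> forall i, c i = 0].

Definition gram (n : nat) (b : 'I_n -> 'M[int]_4) : 'M[int]_n :=
  \matrix_(i, j) intersect (b i) (b j).

(* Write E_i = C/(Z + t_i Z) and w^2 = s w + n0, so that D = s^2 + 4 n0 = -4 (Im w)^2.
   Since End(E_i) = Z + f_i w Z, the endomorphism f_i w gives b_i t_i = f_i w - a_i, and t_i is
   a root of the primitive integral form b_i X^2 + (2 a_i - f_i s) X + c_i of discriminant
   f_i^2 D.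
   By Appell-Humbert an NS class is an alternating integral form A on the lattice which is the
   imaginary part of a hermitian form. The entries A01 and A23 are free (the two fibre classes,
   spanning a hyperbolic plane), A12 and A13 are determined by (A02, A03), and the admissible
   pairs (A02, A03) form a copy of Hom(E1, E2) inside Z^2. With g = gcd(f1, f2), f_i = f_i' g and
   m = f2' b1, the isogeny m t1 = r + beta t2 cuts this copy out by two congruences modulo m; its
   index is |m| because the six coefficients involved have no common prime factor (primitivity
   of both forms and coprimality of f1', f2'). The Gram determinant on the resulting basis is
   -(f1' f2)^2 D = -4 lcm(f1, f2)^2 (Im w)^2. *)

From Pilot Require Import Defs.
From HB Require Import structures.
From mathcomp Require Import all_boot all_order all_algebra all_field.
From mathcomp Require Import zify ring.
Import Order.TTheory GRing.Theory Num.Theory.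
Local Open Scope ring_scope.
Set Implicit Arguments. Unset Strict Implicit. Unset Printing Implicit Defensive.

(** * Change of basis in NS *)

Lemma intersectC (A B : 'M[int]_4) : intersect A B = intersect B A.
Proof. by rewrite /intersect; ring. Qed.

Lemma intersect_suml k (c : 'I_k -> int) (B : 'I_k -> 'M[int]_4) C :
  intersect (\sum_(l < k) c l *: B l) C = \sum_(l < k) c l * intersect (B l) C.
Proof.
by elim/big_rec2: _ => [|l y1 y2 _ <-]; rewrite /intersect !mxE; ring.
Qed.

Lemma gram_basis_change n k (b : 'I_n -> 'M[int]_4) (b' : 'I_k -> 'M[int]_4)
    (P : 'M[int]_(n, k)) :
  (forall i, b i = \sum_(l < k) P i l *: b' l) -> gram b = P *m gram b' *m P^T.
Proof.
move=> bP; apply/matrixP => i j; rewrite !mxE bP intersect_suml.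
under eq_bigr do rewrite intersectC bP intersect_suml mulr_sumr.
rewrite exchange_big /=; apply: eq_bigr => r _; rewrite !mxE mulr_suml.
by apply: eq_bigr => l _; rewrite !mxE intersectC; ring.
Qed.

Lemma int_mx_mul1_le m n (P : 'M[int]_(m, n)) Q : P *m Q = 1%:M -> (m <= n)%N.
Proof.
move=> PQ1; have := mxrankM_maxl (map_mx intr P : 'M[algC]_(m, n)) (map_mx intr Q).
rewrite -map_mxM PQ1 map_mx1 mxrank1 => /leq_trans; apply; exact: rank_leq_col.
Qed.

Lemma int_mx_mul1_det_sqr n (P Q : 'M[int]_n) : P *m Q = 1%:M -> \det P ^+ 2 = 1.
Proof.
move/(congr1 determinant); rewrite det_mulmx det1 mulrC => /intUnitRing.unitzPl; rewrite qualifE.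
by case/orP => /eqP ->.
Qed.

Section NSBasisChange.
Variables t1 t2 : algC.

Lemma NS_basis_coords n (b : 'I_n -> 'M[int]_4) A : NS_basis t1 t2 b -> inNS t1 t2 A ->
  exists c : 'rV[int]_n, A = \sum_(i < n) c 0 i *: b i.
Proof.
by case=> _ span _ /span [c ->]; exists (\row_i c i); apply: eq_bigr => i _; rewrite mxE.
Qed.

Lemma NS_basis_coords_inj n (b : 'I_n -> 'M[int]_4) (c c' : 'I_n -> int) :
  NS_basis t1 t2 b -> \sum_(j < n) c j *: b j = \sum_(j < n) c' j *: b j -> c =1 c'.
Proof.
case=> _ _ free eqc j; apply/eqP; rewrite -subr_eq0; apply/eqP.
apply: (free (fun j => c j - c' j)).
by under eq_bigr do rewrite scalerBl; rewrite sumrB eqc subrr.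
Qed.

Lemma NS_basis_coord_mx n k (b : 'I_n -> 'M[int]_4) (b' : 'I_k -> 'M[int]_4) :
  NS_basis t1 t2 b -> NS_basis t1 t2 b' ->
  exists P : 'M[int]_(n, k), forall i, b i = \sum_(l < k) P i l *: b' l.
Proof.
move=> [inb _ _] b'B; have /fin_all_exists [c bc] := fun i => NS_basis_coords b'B (inb i).
by exists (\matrix_(i, l) c i 0 l) => i; rewrite bc; apply: eq_bigr => l _; rewrite mxE.
Qed.

Lemma NS_basis_coord_mx_mul1 n k (b : 'I_n -> 'M[int]_4) (b' : 'I_k -> 'M[int]_4)
    (P : 'M[int]_(n, k)) (Q : 'M[int]_(k, n)) :
  NS_basis t1 t2 b -> (forall i, b i = \sum_(l < k) P i l *: b' l) ->
  (forall l, b' l = \sum_(j < n) Q l j *: b j) -> P *m Q = 1%:M.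
Proof.
move=> bB bP b'Q; apply/matrixP => i.
apply: (NS_basis_coords_inj (c := fun j => (P *m Q) i j) (c' := fun j => 1%:M i j) bB).
have -> : \sum_(j < n) 1%:M i j *: b j = b i.
  rewrite (bigD1 i) //= big1 => [|j ji]; first by rewrite mxE eqxx scale1r addr0.
  by rewrite mxE eq_sym (negbTE ji) scale0r.
rewrite bP; under [RHS]eq_bigr do rewrite b'Q scaler_sumr.
rewrite exchange_big; apply: eq_bigr => j _.
by rewrite mxE scaler_suml; apply: eq_bigr => l _; rewrite scalerA.
Qed.

Lemma NS_basis_size n k (b : 'I_n -> 'M[int]_4) (b' : 'I_k -> 'M[int]_4) :
  NS_basis t1 t2 b -> NS_basis t1 t2 b' -> n = k.
Proof.
move=> bB b'B.
have [P bP] := NS_basis_coord_mx bB b'B; have [Q b'Q] := NS_basis_coord_mx b'B bB.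
apply/eqP; rewrite eqn_leq.
by rewrite (int_mx_mul1_le (NS_basis_coord_mx_mul1 bB bP b'Q))
  (int_mx_mul1_le (NS_basis_coord_mx_mul1 b'B b'Q bP)).
Qed.

Lemma det_gram_NS_basis n (b b' : 'I_n -> 'M[int]_4) :
  NS_basis t1 t2 b -> NS_basis t1 t2 b' -> \det (gram b) = \det (gram b').
Proof.
move=> bB b'B.
have [P bP] := NS_basis_coord_mx bB b'B; have [Q b'Q] := NS_basis_coord_mx b'B bB.
rewrite (gram_basis_change bP) !det_mulmx det_tr mulrAC -expr2.
by rewrite (int_mx_mul1_det_sqr (NS_basis_coord_mx_mul1 bB bP b'Q)) mul1r.
Qed.

End NSBasisChange.

(** * Sublattices of Z^2 *)

Section Lattice2.
Variable H : int -> int -> bool.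
Hypothesis H_subr : forall x y x' y', H x y -> H x' y' -> H (x - x') (y - y').

Lemma lattice2_mulz (k : int) x y : H x y -> H (k * x) (k * y).
Proof.
move=> Hxy; have H00 : H 0 0 by have := H_subr Hxy Hxy; rewrite !subrr.
have Hn (j : nat) : H (j%:Z * x) (j%:Z * y).
  elim: j => [|j IHj]; first by rewrite !mul0r.
  have := H_subr IHj (H_subr H00 Hxy); rewrite !sub0r !opprK.
  by rewrite -[j.+1]addn1 PoszD !mulrDl !mul1r.
case: k => j; first exact: Hn.
by rewrite NegzE !mulNr -(sub0r (_ * x)) -(sub0r (_ * y)) H_subr.
Qed.

Lemma lattice2_dvdz_axis (k : nat) : (0 < k)%N -> H k 0 ->
  (forall j : nat, (0 < j)%N -> H j 0 -> (k <= j)%N) -> forall x, H x 0 -> (k %| x)%Z.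
Proof.
move=> k_gt0 Hk0 kmin x Hx0; apply/dvdz_mod0P.
have : H (x %% k)%Z 0 by have := H_subr Hx0 (lattice2_mulz (x %/ k)%Z Hk0); rewrite mulr0 subr0.
have : (x %% k < k)%Z by rewrite ltz_pmod.
have : (0 <= x %% k)%Z by rewrite modz_ge0 // eqz_nat -lt0n.
case: (x %% k)%Z => [[|r]|r] // _; rewrite ltz_nat => ltrk /(kmin r.+1 (ltn0Sn r)).
by rewrite leqNgt ltrk.
Qed.

Variable m : int.
Hypotheses (m_neq0 : m != 0) (Hm0 : H m 0) (H0m : H 0 m).

Let M := `|m|%N.
Let M_gt0 : (0 < M)%N. Proof. by rewrite absz_gt0. Qed.
Let HM0 : H M 0. Proof. by have := lattice2_mulz (Num.sg m) Hm0; rewrite mulr0 -normrEsg abszE. Qed.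
Let H0M : H 0 M. Proof. by have := lattice2_mulz (Num.sg m) H0m; rewrite mulr0 -normrEsg abszE. Qed.

Lemma lattice2_axis_gen :
  exists2 x1 : nat, (0 < x1)%N & H x1 0 /\ forall x, H x 0 -> (x1 %| x)%Z.
Proof.
have exM : exists k, (0 < k)%N && H k 0 by exists M; rewrite M_gt0 HM0.
case: (ex_minnP exM) => x1 /andP [x1_gt0 Hx1] x1min; exists x1 => //; split => //.
by apply: lattice2_dvdz_axis => // j j_gt0 Hj; apply: x1min; rewrite j_gt0.
Qed.

(* Reducing the first coordinate modulo M turns "some x with H x k" into a finite search. *)
Lemma lattice2_snd_gen :
  exists x0 (y0 : nat), [/\ (0 < y0)%N, H x0 y0 & forall x y, H x y -> (y0 %| y)%Z].
Proof.
have Hmod x y : H x y -> H (x %% M)%Z y.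
  by move=> Hxy; have := H_subr Hxy (lattice2_mulz (x %/ M)%Z HM0); rewrite mulr0 subr0.
have exM : exists k, (0 < k)%N && [exists x : 'I_M, H x k].
  by exists M; rewrite M_gt0; apply/existsP; exists (Ordinal M_gt0).
case: (ex_minnP exM) => y0 /andP [y0_gt0 /existsP [x0 Hx0]] y0min.
exists x0, y0; split => // x y Hxy; apply/dvdz_mod0P.
have Hr : H (x - (y %/ y0)%Z * x0) (y %% y0)%Z.
  by have := H_subr Hxy (lattice2_mulz (y %/ y0)%Z Hx0); rewrite /modz.
have : (y %% y0 < y0)%Z by rewrite ltz_pmod.
have : (0 <= y %% y0)%Z by rewrite modz_ge0 // eqz_nat -lt0n.
case: (y %% y0)%Z Hr => [[|r]|r] // /Hmod; set z := ((_ - _) %% M)%Z => Hz _.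
rewrite ltz_nat => ltry0.
have : (0 <= z < M)%R by rewrite modz_ge0 ?ltz_pmod // -lt0n M_gt0.
case: z Hz => [zn|zn] // Hz; rewrite ltz_nat => /andP [_ ltzM].
have /y0min : (0 < r.+1)%N && [exists x : 'I_M, H x r.+1] by apply/existsP; exists (Ordinal ltzM).
by rewrite leqNgt ltry0.
Qed.

Lemma lattice2_basis : exists u1 u2 v1 v2, [/\ H u1 u2, H v1 v2 &
  forall x y, H x y -> exists a c, x = a * u1 + c * v1 /\ y = a * u2 + c * v2].
Proof.
have [x1 _ [Hx1 x1dvd]] := lattice2_axis_gen.
have [x0 [y0 [_ Hxy0 y0dvd]]] := lattice2_snd_gen.
exists x1, 0, x0, y0; split => // x y Hxy.
have [c ey] := dvdzP (y0dvd _ _ Hxy).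
have : H (x - c * x0) 0 by have := H_subr Hxy (lattice2_mulz c Hxy0); rewrite ey subrr.
move=> /x1dvd /dvdzP [a ex]; exists a, c; split; last by rewrite mulr0 add0r.
by rewrite -ex subrK.
Qed.

End Lattice2.

Lemma Euclid_dvdzM (p : nat) (a b : int) : prime p ->
  (p%:Z %| a * b)%Z = (p%:Z %| a)%Z || (p%:Z %| b)%Z.
Proof. by move=> p_pr; rewrite !dvdzE abszM Euclid_dvdM. Qed.

Lemma dvdzM_gcd (k X a b : int) : (k %| X * a)%Z -> (k %| X * b)%Z -> (k %| X * gcdz a b)%Z.
Proof.
move=> ka kb; have [u [v <-]] := Bezoutz a b.
by rewrite mulrDr mulrCA [X * (v * b)]mulrCA rpredD // dvdz_mull.
Qed.

Lemma dvdz_of_coprime_multiples (k X : int) (s : seq int) :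
  (forall p : nat, prime p -> ~~ all (fun e => p%:Z %| e)%Z s) ->
  all (fun e => k %| X * e)%Z s -> (k %| X)%Z.
Proof.
move=> noprime kXs.
have kXG : (k %| X * foldr gcdz 0 s)%Z.
  elim: s {noprime} kXs => [|e s IHs] /=; first by rewrite mulr0 dvdz0.
  by case/andP => kXe /IHs; apply: dvdzM_gcd.
have dvdG (p : nat) : (p%:Z %| foldr gcdz 0 s)%Z = all (fun e => p%:Z %| e)%Z s.
  by elim: s {kXs noprime kXG} => [|e s IHs] /=; rewrite ?dvdz0 // dvdz_gcd IHs.
have G_ge0 : 0 <= foldr gcdz 0 s by case: s {kXs noprime kXG dvdG} => //= *; apply: le0z_nat.
move: (foldr gcdz 0 s) kXG dvdG G_ge0 => [[|[|g]]|g] // kXG dvdG _.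
- by have := noprime 2%N isT; rewrite -dvdG dvdz0.
- by rewrite mulr1 in kXG.
- by have := noprime _ (pdiv_prime (isT : 1 < g.+2)%N); rewrite -dvdG dvdzE /= pdiv_dvd.
Qed.

(** * Quadratic orders and CM tori *)

Lemma Im_quadratic_disc (w : algC) (s n0 : int) :
  w ^+ 2 = s%:~R * w + n0%:~R -> w^* = s%:~R - w ->
  (s ^+ 2 + 4 * n0)%:~R = - 4 * 'Im w ^+ 2.
Proof.
move=> w_sqr w_conj; rewrite ImE w_conj.
transitivity (- 'i ^+ 2 * (4 * (s%:~R * w + n0%:~R) + s%:~R ^+ 2 - 4 * s%:~R * w) : algC).
  by rewrite sqrCi; ring.
by rewrite -w_sqr; field.
Qed.

Lemma conj_sqrtC_neg (d : int) : d < 0 -> (sqrtC (d%:~R : algC))^* = - sqrtC (d%:~R).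
Proof.
move=> d_lt0; set r := sqrtC _; have r_sqr : r ^+ 2 = d%:~R by apply: sqrtCK.
have : (r^* - r) * (r^* + r) = 0 by rewrite -subr_sqr -rmorphXn r_sqr rmorph_int subrr.
move/eqP; rewrite mulf_eq0 => /orP [|]; last by rewrite addr_eq0 => /eqP.
rewrite subr_eq0 => /eqP/CrealP r_real.
have : 0 <= r ^+ 2 by rewrite -realEsqr.
by rewrite r_sqr ler0z leNgt d_lt0.
Qed.

Lemma omega_quadratic (d : int) : d < 0 -> exists s n0 : int,
  [/\ omega_of d ^+ 2 = s%:~R * omega_of d + n0%:~R, (omega_of d)^* = s%:~R - omega_of d
    & s ^+ 2 + 4 * n0 != 0].
Proof.
move=> d_lt0; have := sqrtCK (d%:~R : algC); have := conj_sqrtC_neg d_lt0.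
rewrite /omega_of; move: (sqrtC _) => r r_conj r_sqr; case: ifP => [/eqP d_mod4 | _].
- have d_eq : d = (d %/ 4)%Z * 4 + 1 by rewrite {1}(divz_eq d 4) d_mod4.
  exists 1, (d %/ 4)%Z; split; last by move: d_eq d_lt0; lia.
    apply/eqP; rewrite -subr_eq0; apply/eqP.
    transitivity ((r ^+ 2 - d%:~R) / 4 : algC); last by rewrite r_sqr subrr mul0r.
    by rewrite [in RHS]d_eq rmorphD rmorphM /=; field.
  by rewrite rmorphM rmorphD fmorphV /= conjC1 conjC_nat r_conj; field.
- exists 0, d; split; last by move: d_lt0; lia.
    by rewrite r_sqr mul0r add0r.
  by rewrite r_conj sub0r.
Qed.

Lemma isEnd_lead_mul (t : algC) (b B c : int) :
  b%:~R * t ^+ 2 + B%:~R * t + c%:~R = 0 -> isEnd t (b%:~R * t).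
Proof.
move=> t_root; split; first by exists 0, b; rewrite add0r.
by exists (- c), (- B); apply/eqP; rewrite -subr_eq0 -t_root !intrN; apply/eqP; ring.
Qed.

Section QuadraticOmega.
Variables (w : algC) (s n0 : int).
Hypothesis w_sqr : w ^+ 2 = s%:~R * w + n0%:~R.
Hypothesis w_conj : w^* = s%:~R - w.
Hypothesis disc_neq0 : s ^+ 2 + 4 * n0 != 0.

Lemma int_coords_w_eq0 (x y : int) : x%:~R + y%:~R * w = 0 -> x = 0 /\ y = 0.
Proof.
move=> xy0; suff y0 : y = 0.
  by split=> //; move: xy0; rewrite y0 mul0r addr0 => /eqP; rewrite intr_eq0 => /eqP.
apply/eqP; apply: contraNT disc_neq0 => y_neq0.
have xy0_conj : x%:~R + y%:~R * (s%:~R - w) = 0 :> algC.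
  rewrite -w_conj -(rmorph_int (@Num.conj algC) x) -(rmorph_int (@Num.conj algC) y).
  by rewrite -rmorphM -rmorphD xy0 rmorph0.
have : y%:~R * (2 * w - s%:~R) = 0 :> algC.
  rewrite (_ : _ * _ = x%:~R + y%:~R * w - (x%:~R + y%:~R * (s%:~R - w))); last ring.
  by rewrite xy0 xy0_conj subrr.
move/eqP; rewrite mulf_eq0 intr_eq0 (negPf y_neq0) => /eqP w_eq.
have : (s ^+ 2 + 4 * n0)%:~R = (2 * w - s%:~R) ^+ 2 :> algC.
  apply/eqP; rewrite rmorphD rmorphM rmorphXn /= -subr_eq0; apply/eqP.
  by transitivity (4 * (s%:~R * w + n0%:~R - w ^+ 2) : algC); [ring | rewrite -w_sqr subrr mulr0].
by rewrite w_eq expr0n /= => /eqP; rewrite intr_eq0.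
Qed.

Section CMTorus.
Variables (f : nat) (t : algC).
Hypothesis f_gt0 : (0 < f)%N.
Hypothesis tEnd :
  forall alpha, isEnd t alpha <-> exists a b : int, alpha = a%:~R + b%:~R * f%:R * w.

Let f_neq0 : f%:Z != 0. Proof. by rewrite eqz_nat -lt0n. Qed.

Lemma CM_tau_conj (a b : int) : b%:~R * t = f%:R * w - a%:~R ->
  b%:~R * t^* = f%:R * (s%:~R - w) - a%:~R.
Proof.
move=> bt; rewrite -w_conj -(rmorph_int (@Num.conj algC) b) -rmorphM bt.
by rewrite rmorphB rmorphM /= rmorph_int conjC_nat.
Qed.

Lemma CM_tau_trace (a b : int) : b%:~R * t = f%:R * w - a%:~R ->
  b%:~R * t = (f%:Z * s - 2 * a)%:~R - b%:~R * t^*.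
Proof. by move=> bt; rewrite (CM_tau_conj bt) bt rmorphB !rmorphM /=; ring. Qed.

Lemma CM_tau_norm (a b c : int) : b != 0 -> b%:~R * t = f%:R * w - a%:~R ->
  b * c = a ^+ 2 - a * f%:Z * s - f%:Z ^+ 2 * n0 -> b%:~R * t * t^* = c%:~R.
Proof.
move=> b_neq0 bt bc; apply: (mulfI (_ : b%:~R != 0 :> algC)); first by rewrite intr_eq0.
rewrite -rmorphM bc [LHS](_ : _ = (b%:~R * t) * (b%:~R * t^*)); last ring.
rewrite (CM_tau_conj bt) bt; apply/eqP; rewrite -subr_eq0; apply/eqP.
transitivity ((f%:R : algC) ^+ 2 * (s%:~R * w + n0%:~R - w ^+ 2)); first ring.
by rewrite -w_sqr subrr mulr0.
Qed.

Lemma CM_tau_root (a b c : int) : b != 0 -> b%:~R * t = f%:R * w - a%:~R ->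
  b * c = a ^+ 2 - a * f%:Z * s - f%:Z ^+ 2 * n0 ->
  b%:~R * t ^+ 2 + (2 * a - f%:Z * s)%:~R * t + c%:~R = 0.
Proof.
move=> b_neq0 bt bc; rewrite -(CM_tau_norm b_neq0 bt bc) expr2 mulrA {1}(CM_tau_trace bt).
by rewrite !rmorphB !rmorphM /=; ring.
Qed.

Lemma CM_tau_eq : exists a b c : int, [/\ b%:~R * t = f%:R * w - a%:~R, b != 0
  & b * c = a ^+ 2 - a * f%:Z * s - f%:Z ^+ 2 * n0].
Proof.
have [[a [b fw]] [a' [b' fwt]]] : isEnd t (f%:R * w).
  by apply/tEnd; exists 0, 1; rewrite mul1r add0r.
have bt : b%:~R * t = f%:R * w - a%:~R by rewrite fw; ring.
have b_neq0 : b != 0.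
  apply: contra_eqN fw => /eqP b0; rewrite b0 mul0r addr0; apply/eqP => fw_int.
  have [_ /eqP] : - a = 0 /\ f%:Z = 0 by apply: int_coords_w_eq0; rewrite rmorphN /= -fw_int; ring.
  by rewrite (negPf f_neq0).
have [rel0 rel1] :
    f%:Z ^+ 2 * n0 - a' * b + b' * a = 0 /\ f%:Z ^+ 2 * s - a * f%:Z - b' * f%:Z = 0.
  have fw_bt : f%:R * w * (f%:R * w - a%:~R) = a'%:~R * b%:~R + b'%:~R * (f%:R * w - a%:~R).
    by rewrite -bt mulrCA fwt mulrDr; ring.
  apply: int_coords_w_eq0; transitivity (- ((f%:R : algC) ^+ 2 * (w ^+ 2 - s%:~R * w - n0%:~R)
     - (f%:R * w * (f%:R * w - a%:~R) - (a'%:~R * b%:~R + b'%:~R * (f%:R * w - a%:~R))))).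
    by rewrite !rmorphB !rmorphM /=; ring.
  by rewrite fw_bt w_sqr; ring.
have b'_eq : b' = f%:Z * s - a.
  by apply: (mulfI f_neq0); rewrite -[RHS]subr0 -rel1; ring.
by exists a, b, (- a'); split => //; move: rel0; rewrite b'_eq; lia.
Qed.

Lemma CM_tau_primitive (a b c : int) : b != 0 -> b%:~R * t = f%:R * w - a%:~R ->
  b * c = a ^+ 2 - a * f%:Z * s - f%:Z ^+ 2 * n0 ->
  forall p : nat, prime p -> ~~ all (fun e => p%:Z %| e)%Z [:: b; 2 * a - f%:Z * s; c].
Proof.
(* Otherwise [(b / p) * t] would be an endomorphism [x + y f w] with [p y f = f]. *)
move=> b_neq0 bt bc p p_pr; apply/negP => /and4P [/divzK bp /divzK Bp /divzK cp _].
have p_neq0 : (p%:R : algC) != 0 by rewrite pnatr_eq0 -lt0n prime_gt0.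
have : isEnd t ((b %/ p)%Z%:~R * t).
  apply: (isEnd_lead_mul (B := ((2 * a - f%:Z * s) %/ p)%Z) (c := (c %/ p)%Z)).
  apply: (mulfI p_neq0); rewrite mulr0 -(CM_tau_root b_neq0 bt bc) -{2}bp -{2}Bp -{2}cp.
  by rewrite !rmorphM /=; ring.
case/tEnd => x [y bpt]; have [_] : - a - p%:Z * x = 0 /\ f%:Z - p%:Z * y * f%:Z = 0.
  have pbpt : b%:~R * t = p%:R * (x%:~R + y%:~R * f%:R * w).
    by rewrite -bpt -{1}bp rmorphM /=; ring.
  apply: int_coords_w_eq0; rewrite -[RHS](subrr (b%:~R * t)) {1}bt pbpt.
  by rewrite !rmorphB !rmorphM /=; ring.
move/eqP; rewrite -{1}[f%:Z]mul1r -mulrBl mulf_eq0 (negPf f_neq0) orbF subr_eq0 => /eqP py1.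
by move: (dvdz_mulr y (dvdzz p%:Z)); rewrite -py1 dvdz1 absz_nat => /eqP p1; rewrite p1 in p_pr.
Qed.

End CMTorus.
End QuadraticOmega.

(** * Alternating forms on the lattice *)

Lemma ord4P (i : 'I_4) : [\/ i = o0, i = o1, i = o2 | i = o3].
Proof.
case: i => -[|[|[|[|k]]]] lti //;
  [constructor 1 | constructor 2 | constructor 3 | constructor 4];
  by apply/val_inj; rewrite /= inordK.
Qed.

Lemma o0E : nat_of_ord o0 = 0%N. Proof. exact: inordK. Qed.
Lemma o1E : nat_of_ord o1 = 1%N. Proof. exact: inordK. Qed.
Lemma o2E : nat_of_ord o2 = 2%N. Proof. exact: inordK. Qed.
Lemma o3E : nat_of_ord o3 = 3%N. Proof. exact: inordK. Qed.
Definition oE := (o0E, o1E, o2E, o3E).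

Lemma sum_ord4 (V : nmodType) (F : 'I_4 -> V) : \sum_(i < 4) F i = F o0 + F o1 + F o2 + F o3.
Proof.
rewrite !big_ord_recl big_ord0 addr0 !addrA.
by congr (F _ + F _ + F _ + F _); apply/val_inj; rewrite /= inordK.
Qed.

Definition alternating (A : 'M[int]_4) : Prop := forall i j, A j i = - A i j.

Lemma alternating_diag A : alternating A -> forall i, A i i = 0.
Proof. by move=> altA i; have := altA i i; lia. Qed.

Definition alt4v (a01 a02 a03 a12 a13 a23 : int) (i j : nat) : int :=
  match i, j with
  | 0, 1 => a01 | 0, 2 => a02 | 0, 3 => a03 | 1, 2 => a12 | 1, 3 => a13 | 2, 3 => a23
  | 1, 0 => - a01 | 2, 0 => - a02 | 3, 0 => - a03 | 2, 1 => - a12 | 3, 1 => - a13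
  | 3, 2 => - a23 | _, _ => 0 end.

Definition alt4 a01 a02 a03 a12 a13 a23 : 'M[int]_4 :=
  \matrix_(i, j) alt4v a01 a02 a03 a12 a13 a23 i j.

Section Alt4.
Variables a01 a02 a03 a12 a13 a23 : int.
Local Notation A := (alt4 a01 a02 a03 a12 a13 a23).

Lemma alt4_01 : A o0 o1 = a01. Proof. by rewrite mxE !oE. Qed.
Lemma alt4_02 : A o0 o2 = a02. Proof. by rewrite mxE !oE. Qed.
Lemma alt4_03 : A o0 o3 = a03. Proof. by rewrite mxE !oE. Qed.
Lemma alt4_12 : A o1 o2 = a12. Proof. by rewrite mxE !oE. Qed.
Lemma alt4_13 : A o1 o3 = a13. Proof. by rewrite mxE !oE. Qed.
Lemma alt4_23 : A o2 o3 = a23. Proof. by rewrite mxE !oE. Qed.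
Definition alt4E := (alt4_01, alt4_02, alt4_03, alt4_12, alt4_13, alt4_23).

Lemma alt4_alternating : alternating A.
Proof.
move=> i j; rewrite !mxE.
by case: i j => -[|[|[|[|i]]]] ? [[|[|[|[|j]]]] ?]; rewrite /= ?opprK ?oppr0.
Qed.

End Alt4.

Lemma intersect_alt4 a01 a02 a03 a12 a13 a23 b01 b02 b03 b12 b13 b23 :
  intersect (alt4 a01 a02 a03 a12 a13 a23) (alt4 b01 b02 b03 b12 b13 b23) =
  a01 * b23 + b01 * a23 - a02 * b13 - b02 * a13 + a03 * b12 + b03 * a12.
Proof. by rewrite /intersect !alt4E. Qed.

Lemma alternating_eq A B : alternating A -> alternating B ->
  A o0 o1 = B o0 o1 -> A o0 o2 = B o0 o2 -> A o0 o3 = B o0 o3 ->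
  A o1 o2 = B o1 o2 -> A o1 o3 = B o1 o3 -> A o2 o3 = B o2 o3 -> A = B.
Proof.
move=> altA altB *; apply/matrixP => i j.
case: (ord4P i) (ord4P j) => -> [] ->; rewrite ?alternating_diag //.
all: by rewrite [LHS]altA [RHS]altB; congr (- _).
Qed.

Definition hyperbolic_sum (R : nzRingType) (x y y' z : R) : 'M[R]_4 :=
  \matrix_(i, j) match nat_of_ord i, nat_of_ord j with
    | 0, 1 | 1, 0 => 1 | 2, 2 => x | 2, 3 => y | 3, 2 => y' | 3, 3 => z | _, _ => 0 end.

Lemma det_hyperbolic_sum (R : comNzRingType) (x y y' z : R) :
  \det (hyperbolic_sum x y y' z) = - (x * z - y * y').
Proof.
do 4![rewrite !(expand_det_row _ ord0) !big_ord_recl !big_ord0 /cofactor !mxE /=].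
by rewrite !det_mx00 /bump /=; ring.
Qed.

Lemma Im_intr (k : int) : 'Im (k%:~R : algC) = 0.
Proof. exact/Creal_ImP/realz. Qed.

Lemma Im_intrM (k : int) (z : algC) : 'Im (k%:~R * z) = k%:~R * 'Im z.
Proof. exact/ImMl/realz. Qed.

Lemma hform_conj (M : 'M[algC]_2) (x y : algC * algC) :
  Defs.hermitian M -> hform M y x = (hform M x y)^*.
Proof.
move=> herM; rewrite /hform !rmorphD !rmorphM /= !conjCK.
by rewrite -(herM 0 0) -(herM 0 1) -(herM 1 0) -(herM 1 1); ring.
Qed.

Lemma Im_hform_swap (M : 'M[algC]_2) (x y : algC * algC) : Defs.hermitian M ->
  'Im (hform M y x) = - 'Im (hform M x y).
Proof. by move=> herM; rewrite hform_conj // Im_conj. Qed.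

Section LatticeForms.
Variables t1 t2 : algC.

Lemma latvec0 : latvec t1 t2 o0 = (1, 0). Proof. by rewrite /latvec /o0 /= inordK. Qed.
Lemma latvec1 : latvec t1 t2 o1 = (t1, 0). Proof. by rewrite /latvec /o1 /= inordK. Qed.
Lemma latvec2 : latvec t1 t2 o2 = (0, 1). Proof. by rewrite /latvec /o2 /= inordK. Qed.
Lemma latvec3 : latvec t1 t2 o3 = (0, t2). Proof. by rewrite /latvec /o3 /= inordK. Qed.
Definition latvecE := (latvec0, latvec1, latvec2, latvec3).

Definition hform_simpl := (conjC0, conjC1, mulr0, mul0r, mulr1, mul1r, addr0, add0r).

Lemma Im_hform_latvec_alternating (M : 'M[algC]_2) (A : 'M[int]_4) :
  Defs.hermitian M -> alternating A ->
  (forall i j : 'I_4, (i < j)%N ->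
     'Im (hform M (latvec t1 t2 i) (latvec t1 t2 j)) = (A i j)%:~R) ->
  forall i j, 'Im (hform M (latvec t1 t2 i) (latvec t1 t2 j)) = (A i j)%:~R.
Proof.
move=> herM altA upper i j; case: (ltngtP i j) => [/upper // | lt_ji | /val_inj ->].
  by rewrite Im_hform_swap // upper // altA rmorphN opprK.
rewrite alternating_diag //; apply/eqP.
have /eqP := Im_hform_swap (latvec t1 t2 j) (latvec t1 t2 j) herM.
by rewrite -addr_eq0 -mulr2n mulrn_eq0.
Qed.

(* The mixed entries of [Im H] in the basis [latvec], where [h] is the entry [H 0 1]. *)
Definition NS_entries (A : 'M[int]_4) (h : algC) : Prop :=
  [/\ (A o0 o2)%:~R = 'Im h, (A o0 o3)%:~R = 'Im (h * t2^*),
      (A o1 o2)%:~R = 'Im (t1 * h) & (A o1 o3)%:~R = 'Im (t1 * h * t2^*)].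

Lemma inNS_entries A : inNS t1 t2 A -> alternating A /\ exists h, NS_entries A h.
Proof.
case=> M [herM MA]; split=> [i j|].
  by apply/eqP; rewrite -(eqr_int algC) intrN -!MA Im_hform_swap.
by exists (M 0 1); split; rewrite -MA !latvecE /hform /= !hform_simpl.
Qed.

Lemma entries_inNS A h : 'Im t1 != 0 -> 'Im t2 != 0 -> alternating A -> NS_entries A h ->
  inNS t1 t2 A.
Proof.
move=> It1 It2 altA [A02 A03 A12 A13].
pose mu1 : algC := - (A o0 o1)%:~R / 'Im t1; pose mu2 : algC := - (A o2 o3)%:~R / 'Im t2.
have mu1r : mu1 \is Num.real by rewrite realM ?realV ?Creal_Im // -rmorphN realz.
have mu2r : mu2 \is Num.real by rewrite realM ?realV ?Creal_Im // -rmorphN realz.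
pose M : 'M[algC]_2 := \matrix_(i, j)
  if i == 0 then (if j == 0 then mu1 else h) else (if j == 0 then h^* else mu2).
have herM : Defs.hermitian M.
  have ord2P (i : 'I_2) : i = 0 \/ i = 1.
    by case: i => -[|[|]] // ?; [left | right]; apply/val_inj.
  move=> i j; rewrite !mxE; case: (ord2P i) (ord2P j) => -> [] ->; rewrite //= ?conjCK //;
    by symmetry; apply/CrealP.
exists M; split=> //; apply: Im_hform_latvec_alternating => // i j.
case: (ord4P i) (ord4P j) => -> [] ->; rewrite !oE // => _;
  rewrite !latvecE /hform /= !mxE /= !hform_simpl //.
- by rewrite (ImMl mu1r) Im_conj mulrN divfK // opprK.
- by rewrite (ImMl mu2r) Im_conj mulrN divfK // opprK.
Qed.

End LatticeForms.

(** * NS of a product of two CM tori *)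

Section IsogenousPair.
Variables (w : algC) (s n0 : int) (t1 t2 : algC) (a1 b1 c1 a2 b2 c2 : int).
Variables f1 f2 g f1' f2' : nat.
Hypothesis w_sqr : w ^+ 2 = s%:~R * w + n0%:~R.
Hypothesis w_conj : w^* = s%:~R - w.
Hypothesis bt1 : b1%:~R * t1 = f1%:R * w - a1%:~R.
Hypothesis bt2 : b2%:~R * t2 = f2%:R * w - a2%:~R.
Hypotheses (b1_neq0 : b1 != 0) (b2_neq0 : b2 != 0).
Hypothesis bc1 : b1 * c1 = a1 ^+ 2 - a1 * f1%:Z * s - f1%:Z ^+ 2 * n0.
Hypothesis bc2 : b2 * c2 = a2 ^+ 2 - a2 * f2%:Z * s - f2%:Z ^+ 2 * n0.
Hypothesis prim1 :
  forall p : nat, prime p -> ~~ all (fun x => p%:Z %| x)%Z [:: b1; 2 * a1 - f1%:Z * s; c1].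
Hypothesis prim2 :
  forall p : nat, prime p -> ~~ all (fun x => p%:Z %| x)%Z [:: b2; 2 * a2 - f2%:Z * s; c2].
Hypotheses (f1_eq : f1 = (f1' * g)%N) (f2_eq : f2 = (f2' * g)%N).
Hypotheses (f'_coprime : coprime f1' f2') (f2'_gt0 : (0 < f2')%N).
Hypotheses (It1 : 'Im t1 != 0) (It2 : 'Im t2 != 0).

Local Notation m := (f2'%:Z * b1).
Local Notation r := (f1'%:Z * a2 - f2'%:Z * a1).
Local Notation e := (f1'%:Z * f2%:Z * s - f1'%:Z * a2 - f2'%:Z * a1).
Local Notation beta := (f1'%:Z * b2).
Local Notation gamma := (f1'%:Z * c2).
Local Notation kappa := (f2'%:Z * c1).

Lemma m_neq0 : m != 0.
Proof. by rewrite mulf_eq0 negb_or b1_neq0 eqz_nat -lt0n f2'_gt0. Qed.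

Lemma isogeny_eq : m%:~R * t1 = r%:~R + beta%:~R * t2.
Proof. by rewrite !rmorphM /= -!mulrA bt1 bt2 f1_eq f2_eq !natrM; ring. Qed.

Lemma Im_t1_mul h : m%:~R * 'Im (t1 * h) = e%:~R * 'Im h - beta%:~R * 'Im (h * t2^*).
Proof.
rewrite -!Im_intrM -raddfB /= mulrA isogeny_eq.
rewrite (_ : (r%:~R + beta%:~R * t2) * h = r%:~R * h + f1'%:R * (b2%:~R * t2) * h); last first.
  by rewrite rmorphM /=; ring.
by rewrite (CM_tau_trace w_conj bt2) !rmorphM /=; congr ('Im _); ring.
Qed.

Lemma Im_t1_mul_conj h :
  m%:~R * 'Im (t1 * h * t2^*) = r%:~R * 'Im (h * t2^*) + gamma%:~R * 'Im h.
Proof.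
rewrite -!Im_intrM -raddfD /= !mulrA isogeny_eq.
rewrite (_ : (r%:~R + beta%:~R * t2) * h * t2^* =
             r%:~R * (h * t2^*) + f1'%:R * (b2%:~R * t2 * t2^*) * h); last first.
  by rewrite rmorphM /=; ring.
by rewrite (CM_tau_norm w_sqr w_conj b2_neq0 bt2 bc2) rmorphM /=; congr ('Im _); ring.
Qed.

Definition NS_rel (A : 'M[int]_4) : Prop :=
  [/\ alternating A, m * A o1 o2 = e * A o0 o2 - beta * A o0 o3
    & m * A o1 o3 = r * A o0 o3 + gamma * A o0 o2].

Lemma inNS_rel A : inNS t1 t2 A -> NS_rel A.
Proof.
case/inNS_entries=> altA [h [A02 A03 A12 A13]]; split=> //; apply/eqP; rewrite -(eqr_int algC).
  by rewrite intrB !(intrM _ m, intrM _ e, intrM _ beta) A02 A03 A12 Im_t1_mul.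
by rewrite intrD !(intrM _ m, intrM _ r, intrM _ gamma) A02 A03 A13 Im_t1_mul_conj.
Qed.

Lemma NS_rel_eq A B : NS_rel A -> NS_rel B -> A o0 o1 = B o0 o1 -> A o0 o2 = B o0 o2 ->
  A o0 o3 = B o0 o3 -> A o2 o3 = B o2 o3 -> A = B.
Proof.
move=> [altA A12 A13] [altB B12 B13] e01 e02 e03 e23.
apply: alternating_eq => //; apply: (mulfI m_neq0).
  by rewrite A12 B12 e02 e03.
by rewrite A13 B13 e02 e03.
Qed.

Lemma NS_rel_sum k (c : 'I_k -> int) (B : 'I_k -> 'M[int]_4) :
  (forall l, NS_rel (B l)) -> NS_rel (\sum_(l < k) c l *: B l).
Proof.
move=> relB; elim/big_rec: _ => [|l A _ [altA A12 A13]].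
  by split=> [i j| |]; rewrite !mxE ?oppr0 ?mulr0 ?subr0 ?addr0.
have [altB B12 B13] := relB l; split=> [i j| |]; rewrite !mxE.
- by rewrite altA altB; ring.
- by rewrite mulrDr mulrCA B12 A12; ring.
- by rewrite mulrDr mulrCA B13 A13; ring.
Qed.

(* The pairs [(A o0 o2, A o0 o3)] of NS classes [A]: the lattice [Hom(E1, E2)]. *)
Definition inHom (p q : int) : bool := (m %| e * p - beta * q)%Z && (m %| r * q + gamma * p)%Z.

Definition homNS (a01 p q a23 : int) : 'M[int]_4 :=
  alt4 a01 p q ((e * p - beta * q) %/ m)%Z ((r * q + gamma * p) %/ m)%Z a23.

Lemma homNS_rel a01 p q a23 : inHom p q -> NS_rel (homNS a01 p q a23).
Proof.
case/andP=> m_dvd12 m_dvd13; split; first exact: alt4_alternating.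
  by rewrite !alt4E mulrC divzK.
by rewrite !alt4E mulrC divzK.
Qed.

Lemma NS_rel_inHom A : NS_rel A -> inHom (A o0 o2) (A o0 o3).
Proof. by case=> _ e12 e13; rewrite /inHom -e12 -e13 !(dvdz_mulr _ (dvdzz m)). Qed.

Lemma homNS_inNS a01 p q a23 : inHom p q -> inNS t1 t2 (homNS a01 p q a23).
Proof.
move=> pq_Hom; have [altA A12 A13] := homNS_rel a01 a23 pq_Hom.
set A := homNS _ _ _ _ in altA A12 A13 *.
have [A02 A03] : A o0 o2 = p /\ A o0 o3 = q by rewrite !alt4E.
pose h := ((- q)%:~R + p%:~R * t2) / 'Im t2.
have It2_real : ('Im t2)^-1 \is Num.real by rewrite realV Creal_Im.
have Ih : 'Im h = p%:~R.
  by rewrite /h mulrC (ImMl It2_real) raddfD /= Im_intr Im_intrM add0r mulrCA mulVf ?mulr1.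
have Iht2 : 'Im (h * t2^*) = q%:~R.
  rewrite /h mulrAC mulrC (ImMl It2_real) mulrDl -mulrA raddfD /= !Im_intrM Im_conj.
  rewrite (_ : 'Im (t2 * t2^*) = 0) ?mulr0 ?addr0.
    by rewrite intrN mulrNN mulrCA mulVf ?mulr1.
  by apply/Creal_ImP; rewrite -normCK realX ?normr_real.
have mC_neq0 : m%:~R != 0 :> algC by rewrite intr_eq0 m_neq0.
apply: (entries_inNS (h := h)) => //; split; rewrite ?A02 ?A03 //; apply: (mulfI mC_neq0).
  by rewrite Im_t1_mul Ih Iht2 -[LHS]intrM A12 A02 A03 intrB !intrM.
by rewrite Im_t1_mul_conj Ih Iht2 -[LHS]intrM A13 A02 A03 intrD !intrM.
Qed.

Lemma isogeny_disc : e * r + beta * gamma = m * kappa.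
Proof.
transitivity (e * r + f1'%:Z ^+ 2 * (b2 * c2)); first ring.
rewrite bc2; transitivity (f2'%:Z ^+ 2 * (b1 * c1)); last ring.
by rewrite bc1 f1_eq f2_eq !PoszM; ring.
Qed.

Lemma isogeny_no_common_prime (p : nat) : prime p ->
  ~~ all (fun x => p%:Z %| x)%Z [:: e; beta; gamma; r; kappa; m].
Proof.
move=> p_pr; apply/negP; rewrite /= andbT => /and5P [pe pbeta pgamma pr /andP [pkappa pm]].
have not_both : ~~ ((p%:Z %| f1'%:Z)%Z && (p%:Z %| f2'%:Z)%Z).
  by rewrite !dvdzE /= -dvdn_gcd (eqP f'_coprime) dvdn1; apply/eqP => p1; rewrite p1 in p_pr.
have [pf2' | npf2'] := boolP (p%:Z %| f2'%:Z)%Z.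
- have npf1' : ~~ (p%:Z %| f1'%:Z)%Z by apply: contraNN not_both => ->.
  have pb2 : (p%:Z %| b2)%Z by move: pbeta; rewrite Euclid_dvdzM // (negPf npf1').
  have pc2 : (p%:Z %| c2)%Z by move: pgamma; rewrite Euclid_dvdzM // (negPf npf1').
  have pa2 : (p%:Z %| a2)%Z.
    have : (p%:Z %| r + f2'%:Z * a1)%Z by rewrite rpredD // dvdz_mulr.
    by rewrite subrK Euclid_dvdzM // (negPf npf1').
  have pf2s : (p%:Z %| f2%:Z * s)%Z by rewrite f2_eq PoszM; do 2!apply: dvdz_mulr.
  by move: (prim2 p_pr); rewrite /= pb2 pc2 (rpredB (dvdz_mull _ pa2) pf2s).
- have pb1 : (p%:Z %| b1)%Z by move: pm; rewrite Euclid_dvdzM // (negPf npf2').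
  have pc1 : (p%:Z %| c1)%Z by move: pkappa; rewrite Euclid_dvdzM // (negPf npf2').
  have : (p%:Z %| f2'%:Z * (2 * a1 - f1%:Z * s))%Z.
    rewrite (_ : _ * _ = - (e + r)); first by rewrite rpredN rpredD.
    by rewrite f1_eq f2_eq !PoszM; ring.
  rewrite Euclid_dvdzM // (negPf npf2') /= => pB1.
  by move: (prim1 p_pr); rewrite /= pb1 pB1 pc1.
Qed.

Lemma inHom_subr x y x' y' : inHom x y -> inHom x' y' -> inHom (x - x') (y - y').
Proof.
case/andP=> d1 d2 /andP [d1' d2']; apply/andP; split.
  rewrite (_ : _ - _ = (e * x - beta * y) - (e * x' - beta * y')); first exact: rpredB.
  by ring.
rewrite (_ : _ + _ = (r * y + gamma * x) - (r * y' + gamma * x')); first exact: rpredB.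
by ring.
Qed.

Lemma inHom_m0 : inHom m 0.
Proof. by rewrite /inHom !mulr0 subr0 add0r mulrC dvdz_mulr // mulrC dvdz_mulr. Qed.

Lemma inHom_0m : inHom 0 m.
Proof. by rewrite /inHom !mulr0 sub0r addr0 rpredN mulrC dvdz_mulr // mulrC dvdz_mulr. Qed.

Lemma inHom00 : inHom 0 0.
Proof. by have := inHom_subr inHom_m0 inHom_m0; rewrite !subrr. Qed.

Definition det2 (u1 u2 v1 v2 : int) : int := u1 * v2 - u2 * v1.

Lemma inHom_det2_dvd u1 u2 v1 v2 :
  inHom u1 u2 -> inHom v1 v2 -> (m %| det2 u1 u2 v1 v2)%Z.
Proof.
case/andP=> /dvdzP [x1 ex1] /dvdzP [x2 ex2] /andP [/dvdzP [y1 ey1] /dvdzP [y2 ey2]].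
apply: (dvdz_of_coprime_multiples (s := [:: e; beta; gamma; r; kappa; m])).
  by move=> p; apply: isogeny_no_common_prime.
rewrite /= (dvdz_mull _ (dvdzz m)) !andbT; apply/and5P; split; apply/dvdzP.
- exists (x1 * v2 - y1 * u2).
  transitivity ((e * u1 - beta * u2) * v2 - (e * v1 - beta * v2) * u2).
    by rewrite /det2; ring.
  by rewrite ex1 ey1; ring.
- exists (x1 * v1 - y1 * u1).
  transitivity ((e * u1 - beta * u2) * v1 - (e * v1 - beta * v2) * u1).
    by rewrite /det2; ring.
  by rewrite ex1 ey1; ring.
- exists (x2 * v2 - y2 * u2).
  transitivity ((r * u2 + gamma * u1) * v2 - (r * v2 + gamma * v1) * u2).
    by rewrite /det2; ring.
  by rewrite ex2 ey2; ring.
- exists (y2 * u1 - x2 * v1).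
  transitivity ((r * v2 + gamma * v1) * u1 - (r * u2 + gamma * u1) * v1).
    by rewrite /det2; ring.
  by rewrite ex2 ey2; ring.
- exists (x1 * y2 - y1 * x2); apply: (mulfI m_neq0); rewrite /det2.
  transitivity ((e * r + beta * gamma) * (u1 * v2 - u2 * v1)); first by rewrite isogeny_disc; ring.
  transitivity ((e * u1 - beta * u2) * (r * v2 + gamma * v1)
                - (e * v1 - beta * v2) * (r * u2 + gamma * u1)); first ring.
  by rewrite ex1 ex2 ey1 ey2; ring.
Qed.

Lemma det2_comb u1 u2 v1 v2 a c a' c' :
  det2 (a * u1 + c * v1) (a * u2 + c * v2) (a' * u1 + c' * v1) (a' * u2 + c' * v2) =
  (a * c' - c * a') * det2 u1 u2 v1 v2.
Proof. by rewrite /det2; ring. Qed.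

Lemma inHom_basis_det2 u1 u2 v1 v2 : inHom u1 u2 -> inHom v1 v2 ->
  (forall x y, inHom x y -> exists a c, x = a * u1 + c * v1 /\ y = a * u2 + c * v2) ->
  det2 u1 u2 v1 v2 ^+ 2 = m ^+ 2.
Proof.
move=> u_Hom v_Hom uv_span; set D := det2 u1 u2 v1 v2.
have D_dvd x y x' y' k : inHom x y -> inHom x' y' -> det2 x y x' y' = k -> (D %| k)%Z.
  move=> /uv_span [a [c [-> ->]]] /uv_span [a' [c' [-> ->]]] <-.
  by rewrite det2_comb dvdz_mull.
have g1 : inHom r (- gamma).
  apply/andP; split; last by rewrite mulrN mulrC addNr dvdz0.
  by apply/dvdzP; exists kappa; rewrite [RHS]mulrC -isogeny_disc; ring.
have g2 : inHom beta e.
  apply/andP; split; first by rewrite mulrC subrr dvdz0.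
  by apply/dvdzP; exists kappa; rewrite [RHS]mulrC -isogeny_disc; ring.
have Dm : (D %| m)%Z.
  apply: (dvdz_of_coprime_multiples (s := [:: e; beta; gamma; r; kappa; m])).
    by move=> p; apply: isogeny_no_common_prime.
  rewrite /= andbT; do ![apply/andP; split].
  - by rewrite -rpredN; apply: (D_dvd _ _ _ _ _ g2 inHom_m0); rewrite /det2; ring.
  - by apply: (D_dvd _ _ _ _ _ g2 inHom_0m); rewrite /det2; ring.
  - by apply: (D_dvd _ _ _ _ _ g1 inHom_m0); rewrite /det2; ring.
  - by apply: (D_dvd _ _ _ _ _ g1 inHom_0m); rewrite /det2; ring.
  - by apply: (D_dvd _ _ _ _ _ g1 g2); rewrite /det2 -isogeny_disc; ring.
  - by apply: (D_dvd _ _ _ _ _ inHom_m0 inHom_0m); rewrite /det2; ring.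
have /eqP absD : `|D|%N == `|m|%N by rewrite eqn_dvd -!dvdzE Dm inHom_det2_dvd.
by rewrite -[LHS]real_normK ?num_real // -[RHS]real_normK ?num_real // -!abszE absD.
Qed.

Lemma intersect_homNS p q p' q' : inHom p q -> inHom p' q' ->
  m * intersect (homNS 0 p q 0) (homNS 0 p' q' 0) =
  - p * (r * q' + gamma * p') - p' * (r * q + gamma * p)
  + q * (e * p' - beta * q') + q' * (e * p - beta * q).
Proof.
move=> /andP [/divzK d1 /divzK d2] /andP [/divzK d1' /divzK d2'].
rewrite /homNS intersect_alt4; move: d1 d2 d1' d2'.
set k1 := (_ %/ m)%Z; set k2 := (_ %/ m)%Z; set k1' := (_ %/ m)%Z; set k2' := (_ %/ m)%Z.
by move=> <- <- <- <-; ring.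
Qed.

Section HomBasis.
Variables u1 u2 v1 v2 : int.
Hypotheses (u_Hom : inHom u1 u2) (v_Hom : inHom v1 v2).
Hypothesis uv_span :
  forall x y, inHom x y -> exists a c, x = a * u1 + c * v1 /\ y = a * u2 + c * v2.

Definition homNS_basis (i : 'I_4) : 'M[int]_4 :=
  match nat_of_ord i with
  | 0 => homNS 1 0 0 0 | 1 => homNS 0 0 0 1 | 2 => homNS 0 u1 u2 0 | _ => homNS 0 v1 v2 0 end.

Lemma homNS_basisE :
  [/\ homNS_basis o0 = homNS 1 0 0 0, homNS_basis o1 = homNS 0 0 0 1,
      homNS_basis o2 = homNS 0 u1 u2 0 & homNS_basis o3 = homNS 0 v1 v2 0].
Proof. by rewrite /homNS_basis !oE. Qed.

Lemma homNS_basis_sumE (c : 'I_4 -> int) i j :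
  (\sum_(l < 4) c l *: homNS_basis l : 'M[int]_4) i j =
  c o0 * homNS 1 0 0 0 i j + c o1 * homNS 0 0 0 1 i j + c o2 * homNS 0 u1 u2 0 i j
  + c o3 * homNS 0 v1 v2 0 i j.
Proof. by have [B0 B1 B2 B3] := homNS_basisE; rewrite summxE sum_ord4 B0 B1 B2 B3 !mxE. Qed.

Lemma homNS_basis_NS : det2 u1 u2 v1 v2 != 0 -> NS_basis t1 t2 homNS_basis.
Proof.
move=> D_neq0; have [B0 B1 B2 B3] := homNS_basisE.
have Hom_basis l : exists a01 p q a23, inHom p q /\ homNS_basis l = homNS a01 p q a23.
  case: (ord4P l) => ->;
    [exists 1, 0, 0, 0 | exists 0, 0, 0, 1 | exists 0, u1, u2, 0 | exists 0, v1, v2, 0];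
    by split; rewrite ?B0 ?B1 ?B2 ?B3 ?inHom00.
split=> [i | A /inNS_rel relA | c /matrixP sum0 i].
- by have [? [? [? [? [? ->]]]]] := Hom_basis i; apply: homNS_inNS.
- have [x [y [A02 A03]]] := uv_span (NS_rel_inHom relA).
  pose c (i : 'I_4) : int :=
    match nat_of_ord i with 0 => A o0 o1 | 1 => A o2 o3 | 2 => x | _ => y end.
  exists c; apply: NS_rel_eq => //.
  - by apply: NS_rel_sum => l; have [? [? [? [? [? ->]]]]] := Hom_basis l; apply: homNS_rel.
  - by rewrite (homNS_basis_sumE c o0 o1) /homNS !alt4E /c !oE; ring.
  - by rewrite (homNS_basis_sumE c o0 o2) /homNS !alt4E /c !oE A02; ring.
  - by rewrite (homNS_basis_sumE c o0 o3) /homNS !alt4E /c !oE A03; ring.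
  - by rewrite (homNS_basis_sumE c o2 o3) /homNS !alt4E /c !oE; ring.
- have coef k l : c o0 * homNS 1 0 0 0 k l + c o1 * homNS 0 0 0 1 k l
      + c o2 * homNS 0 u1 u2 0 k l + c o3 * homNS 0 v1 v2 0 k l = 0.
    by rewrite -(homNS_basis_sumE c k l) sum0 mxE.
  have := coef o0 o1; have := coef o2 o3; have := coef o0 o2; have := coef o0 o3.
  rewrite /homNS !alt4E !mulr0 !add0r !addr0 !mulr1 => e03 e02 z1 z0.
  have e2 : c o2 * det2 u1 u2 v1 v2 =
           v2 * (c o2 * u1 + c o3 * v1) - v1 * (c o2 * u2 + c o3 * v2) by rewrite /det2; ring.
  have e3 : c o3 * det2 u1 u2 v1 v2 =
           u1 * (c o2 * u2 + c o3 * v2) - u2 * (c o2 * u1 + c o3 * v1) by rewrite /det2; ring.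
  rewrite e02 e03 !mulr0 subrr in e2 e3; move/eqP: e2; move/eqP: e3.
  rewrite !mulf_eq0 (negPf D_neq0) !orbF => /eqP z3 /eqP z2.
  by case: (ord4P i) => ->.
Qed.

Lemma det_gram_homNS_basis : det2 u1 u2 v1 v2 ^+ 2 = m ^+ 2 ->
  \det (gram homNS_basis) = f1'%:Z ^+ 2 * f2%:Z ^+ 2 * (s ^+ 2 + 4 * n0).
Proof.
move=> D2; have [B0 B1 B2 B3] := homNS_basisE.
pose I p q p' q' := intersect (homNS 0 p q 0) (homNS 0 p' q' 0).
have -> : gram homNS_basis =
    hyperbolic_sum (I u1 u2 u1 u2) (I u1 u2 v1 v2) (I v1 v2 u1 u2) (I v1 v2 v1 v2).
  apply/matrixP => i j; rewrite !mxE.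
  by case: (ord4P i) (ord4P j) => -> [] ->; rewrite !oE ?B0 ?B1 ?B2 ?B3 /I /homNS
    !intersect_alt4 ?mulr0 ?subr0 ?addr0 ?div0z; ring.
rewrite det_hyperbolic_sum; apply: (mulfI (_ : m ^+ 2 != 0)); first by rewrite expf_eq0 m_neq0.
transitivity (- ((m * I u1 u2 u1 u2) * (m * I v1 v2 v1 v2)
                - (m * I u1 u2 v1 v2) * (m * I v1 v2 u1 u2))); first ring.
rewrite /I !intersect_homNS //.
transitivity (- (f1'%:Z ^+ 2 * (4 * (b2 * c2) - (2 * a2 - f2%:Z * s) ^+ 2))
              * det2 u1 u2 v1 v2 ^+ 2); first by rewrite /det2; ring.
by rewrite D2 bc2; ring.
Qed.

End HomBasis.

Lemma NS_basis_det_gram : exists b : 'I_4 -> 'M[int]_4,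
  NS_basis t1 t2 b /\ \det (gram b) = f1'%:Z ^+ 2 * f2%:Z ^+ 2 * (s ^+ 2 + 4 * n0).
Proof.
have [u1 [u2 [v1 [v2 [u_Hom v_Hom uv_span]]]]] :=
  lattice2_basis inHom_subr m_neq0 inHom_m0 inHom_0m.
have D2 := inHom_basis_det2 u_Hom v_Hom uv_span.
have D_neq0 : det2 u1 u2 v1 v2 != 0 by rewrite -sqrf_eq0 D2 sqrf_eq0 m_neq0.
exists (homNS_basis u1 u2 v1 v2); split; first exact: homNS_basis_NS.
exact: det_gram_homNS_basis.
Qed.

End IsogenousPair.

Lemma coprime_divn_gcd (m n : nat) :
  (0 < gcdn m n)%N -> coprime (m %/ gcdn m n) (n %/ gcdn m n).
Proof.
move=> g_gt0; rewrite /coprime -(eqn_pmul2r g_gt0) mul1n muln_gcdl.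
by rewrite !divnK ?dvdn_gcdl ?dvdn_gcdr.
Qed.

Lemma lcmn_divn_gcd (m n : nat) : lcmn m n = (m %/ gcdn m n * n)%N.
Proof. by rewrite /lcmn mulnC -muln_divA ?dvdn_gcdl // mulnC. Qed.

Unset Implicit Arguments.
Theorem mainTheorem12 (d : int) (f1 f2 : nat) (t1 t2 : algC)
  (hd : d < 0) (hsf : squarefree_int d)
  (hf1 : (0 < f1)%N) (hf2 : (0 < f2)%N)
  (ht1 : 0 < 'Im t1) (ht2 : 0 < 'Im t2)
  (hEnd1 : forall alpha, isEnd t1 alpha <->
     exists a b : int, alpha = a%:~R + b%:~R * f1%:R * omega_of d)
  (hEnd2 : forall alpha, isEnd t2 alpha <->
     exists a b : int, alpha = a%:~R + b%:~R * f2%:R * omega_of d)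
  (hiso : isogenous t1 t2)
  (n : nat) (b : 'I_n -> 'M[int]_4) (hb : NS_basis t1 t2 b) :
  (\det (gram b))%:~R = - 4 * ((lcmn f1 f2)%:R) ^+ 2 * ('Im (omega_of d)) ^+ 2 :> algC.
Proof.
have [s [n0 [w_sqr w_conj disc_neq0]]] := omega_quadratic hd.
have [a1 [b1 [c1 [bt1 b1_neq0 bc1]]]] := CM_tau_eq w_sqr w_conj disc_neq0 hf1 hEnd1.
have [a2 [b2 [c2 [bt2 b2_neq0 bc2]]]] := CM_tau_eq w_sqr w_conj disc_neq0 hf2 hEnd2.
have prim1 := CM_tau_primitive w_sqr w_conj disc_neq0 hf1 hEnd1 b1_neq0 bt1 bc1.
have prim2 := CM_tau_primitive w_sqr w_conj disc_neq0 hf2 hEnd2 b2_neq0 bt2 bc2.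
have g_gt0 : (0 < gcdn f1 f2)%N by rewrite gcdn_gt0 hf1.
have f1_eq : f1 = (f1 %/ gcdn f1 f2 * gcdn f1 f2)%N by rewrite divnK ?dvdn_gcdl.
have f2_eq : f2 = (f2 %/ gcdn f1 f2 * gcdn f1 f2)%N by rewrite divnK ?dvdn_gcdr.
have f2'_gt0 : (0 < f2 %/ gcdn f1 f2)%N by rewrite divn_gt0 // dvdn_leq ?dvdn_gcdr.
have [b' [b'B det_b']] := NS_basis_det_gram w_sqr w_conj bt1 bt2 b1_neq0 b2_neq0 bc1 bc2
  prim1 prim2 f1_eq f2_eq (coprime_divn_gcd g_gt0) f2'_gt0 (lt0r_neq0 ht1) (lt0r_neq0 ht2).
have n4 := NS_basis_size hb b'B; subst n.
rewrite (det_gram_NS_basis hb b'B) det_b' lcmn_divn_gcd !intrM natrM.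
by rewrite (Im_quadratic_disc w_sqr w_conj); ring.
Qed.
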